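(* Let $\mathcal S$ be the toy stabilizer group of a non-maximal information state on $n$ elementary systems, and let parties $A$ and $B$ hold $k$ and $n-k$ of these elementary systems respectively. Let $\mathcal S_A$ (resp. $\mathcal S_B$) be the subgroup of elements of $\mathcal S$ acting as the identity on every elementary system of $B$ (resp. of $A$), and $\mathcal S_A\cdot\mathcal S_B$ the group they generate. If $\mathcal S = \mathcal S_A\cdot\mathcal S_B$, then the state is not entangled.
   Context: Toy Pauli matrices $\mathcal{X} = \mathrm{diag}(1,-1,1,-1)$, $\mathcal{Y} = \mathrm{diag}(1,-1,-1,1)$, $\mathcal{Z} = \mathrm{diag}(1,1,-1,-1)$; toy Pauli group $G_n = \{\alpha\,p_1\otimes\cdots\otimes p_n: p_i\in\{\mathbb 1_4,\mathcal X,\mathcal Y,\mathcal Z\},\alpha=\pm1\}$. Elements of $G_n$ ''commute'' if their images under the homomorphism $\mathcal X_k\mapsto X_k$, $\mathcal Z_k\mapsto Z_k$, $-\mathbb 1\mapsto -\mathbb 1$ into the $n$-qubit Pauli group commute. A toy stabilizer group is a subgroup of $G_n$ of pairwise ''commuting'' elements not containing $-\mathbb 1$; its epistemic state is the set of ontic states $e_{i_1}\otimes\cdots\otimes e_{i_n}$ fixed by all its elements; it is non-maximal information (mixed) if it has fewer than $n$ independent generators. A product state between $A$ and $B$ is an epistemic state $E_A\times E_B = \{(a,b): a\in E_A, b\in E_B\}$ with $E_A, E_B$ valid epistemic states on $A$ and $B$. The mixture of epistemic states with disjoint ontic bases whose union is a valid epistemic state is the state whose ontic basis is that union. A mixed state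 is entangled if it cannot be written as a mixture of product states. *)

From mathcomp Require Import all_boot all_order all_algebra.
Set Implicit Arguments. Unset Strict Implicit. Unset Printing Implicit Defensive.
Import GRing.Theory.

(* Toy Pauli labels are encoded in ['I_4]:
   0 = identity 1_4, 1 = X, 2 = Y, 3 = Z.  Ontic states of one elementary
   system e_1..e_4 are encoded in ['I_4] as 0..3. *)
Definition ontic (I : finType) := {ffun I -> 'I_4}.

(* Diagonal entry (j,j) of the toy Pauli matrix p (as an integer +1/-1):
   X = diag(1,-1,1,-1), Y = diag(1,-1,-1,1), Z = diag(1,1,-1,-1). *)
Definition toy_entry (p j : 'I_4) : int :=
  match nat_of_ord p, nat_of_ord j with
  | 1, 1 | 1, 3 => -1
  | 2, 1 | 2, 2 => -1
  | 3, 2 | 3, 3 => -1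
  | _, _ => 1
  end%R.

(* An element alpha p_1 (x) ... (x) p_n of the toy Pauli group:
   first component [true] means alpha = -1. *)
Definition toyP (I : finType) := (bool * {ffun I -> 'I_4})%type.

(* The (diagonal) eigenvalue of g on the ontic basis state s:
   g (e_{s_1} (x) ... (x) e_{s_n}) = toy_eig g s * (e_{s_1} (x) ... ). *)
Definition toy_eig (I : finType) (g : toyP I) (s : ontic I) : int :=
  ((-1) ^+ g.1 * \prod_(i : I) toy_entry (g.2 i) (s i))%R.

(* Product of single-site toy Paulis (diagonal matrix product):
   the Klein four-group table, X*Y = Z, X*Z = Y, Y*Z = X, p*p = 1. *)
Definition pmul (p q : 'I_4) : 'I_4 :=
  match nat_of_ord p, nat_of_ord q with
  | 0, _ => q
  | _, 0 => p
  | 1, 1 | 2, 2 | 3, 3 => ord0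
  | 1, 2 | 2, 1 => inord 3
  | 1, 3 | 3, 1 => inord 2
  | _, _ => inord 1
  end.

Definition toy_mul (I : finType) (g h : toyP I) : toyP I :=
  (g.1 (+) h.1, [ffun i => pmul (g.2 i) (h.2 i)]).

Definition toy_one (I : finType) : toyP I := (false, [ffun => ord0]).
Definition toy_mone (I : finType) : toyP I := (true, [ffun => ord0]).

(* "Commutation": image under X_k |-> X_k, Z_k |-> Z_k (so Y_k |-> X_k Z_k)
   into the qubit Pauli group; two Pauli strings commute iff the number of
   sites where their images anticommute is even (symplectic form). *)
Definition xbit (p : 'I_4) : bool := (nat_of_ord p == 1) || (nat_of_ord p == 2).
Definition zbit (p : 'I_4) : bool := (nat_of_ord p == 2) || (nat_of_ord p == 3).
Definition site_anticomm (p q : 'I_4) : bool :=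
  (xbit p && zbit q) (+) (zbit p && xbit q).
Definition toy_commute (I : finType) (g h : toyP I) : bool :=
  ~~ odd #|[set i : I | site_anticomm (g.2 i) (h.2 i)]|.

(* Subgroups of the toy Pauli group (every element is its own inverse). *)
Definition toy_subgroup (I : finType) (H : {set toyP I}) : bool :=
  (toy_one I \in H) && [forall g in H, forall h in H, toy_mul g h \in H].

Definition toy_gen (I : finType) (A : {set toyP I}) : {set toyP I} :=
  \bigcap_(H : {set toyP I} | toy_subgroup H && (A \subset H)) H.

Definition toy_stab_group (I : finType) (S : {set toyP I}) : Prop :=
  [/\ toy_subgroup S,
      (forall g h, g \in S -> h \in S -> toy_commute g h)
    & toy_mone I \notin S].

Definition epistemic (I : finType) (S : {set toyP I}) : {set ontic I} :=
  [set s | [forall g in S, toy_eig g s == 1%R]].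

Definition valid_epistemic (I : finType) (E : {set ontic I}) : Prop :=
  exists S : {set toyP I}, toy_stab_group S /\ E = epistemic S.

Definition toy_independent (I : finType) (gs : seq (toyP I)) : Prop :=
  uniq gs /\ forall g, g \in gs -> g \notin toy_gen [set x in gs | x != g].

Definition non_maximal (I : finType) (S : {set toyP I}) : Prop :=
  exists gs : seq (toyP I),
    [/\ size gs < #|I|, toy_independent gs & toy_gen [set x in gs] = S].

Definition sysA (n : nat) (A : {set 'I_n}) := {i : 'I_n | i \in A}.
Definition sysB (n : nat) (A : {set 'I_n}) := {i : 'I_n | i \in ~: A}.

Definition restrA (n : nat) (A : {set 'I_n}) (s : ontic 'I_n) : ontic (sysA A) :=
  [ffun i => s (val i)].
Definition restrB (n : nat) (A : {set 'I_n}) (s : ontic 'I_n) : ontic (sysB A) :=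
  [ffun i => s (val i)].

(* Product state E_A x E_B, identifying an ontic state with the pair of
   its restrictions to A and B. *)
Definition prod_state (n : nat) (A : {set 'I_n})
  (EA : {set ontic (sysA A)}) (EB : {set ontic (sysB A)}) : {set ontic 'I_n} :=
  [set s | (restrA A s \in EA) && (restrB A s \in EB)].

Definition mixture_of_products (n : nat) (A : {set 'I_n}) (E : {set ontic 'I_n}) : Prop :=
  exists (m : nat) (EA : 'I_m -> {set ontic (sysA A)}) (EB : 'I_m -> {set ontic (sysB A)}),
    [/\ forall j, valid_epistemic (EA j) /\ valid_epistemic (EB j),
        forall j1 j2, j1 != j2 ->
          [disjoint prod_state (EA j1) (EB j1) & prod_state (EA j2) (EB j2)]
      & E = \bigcup_(j < m) prod_state (EA j) (EB j)].

Definition entangled (n : nat) (A : {set 'I_n}) (E : {set ontic 'I_n}) : Prop :=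
  ~ mixture_of_products A E.

Definition S_A (n : nat) (A : {set 'I_n}) (S : {set toyP 'I_n}) : {set toyP 'I_n} :=
  [set g in S | [forall i in ~: A, nat_of_ord (g.2 i) == 0]].
Definition S_B (n : nat) (A : {set 'I_n}) (S : {set toyP 'I_n}) : {set toyP 'I_n} :=
  [set g in S | [forall i in A, nat_of_ord (g.2 i) == 0]].

(* The epistemic state of a group is the set of ontic states fixed by a
   generating set, so S = <S_A ∪ S_B> makes it the intersection of the states
   fixed by S_A and by S_B.  Elements of S_A act trivially outside A, so being
   fixed by S_A only depends on the restriction of the ontic state to A, and
   the restriction of S_A to A is a toy stabilizer group of A; likewise for B.
   Hence the state is a single product state of valid epistemic states. *)
From mathcomp Require Import all_boot all_order all_algebra.
Set Implicit Arguments. Unset Strict Implicit. Unset Printing Implicit Defensive.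
Import GRing.Theory.
Local Open Scope ring_scope.

Lemma toy_entry0 (j : 'I_4) : toy_entry ord0 j = 1.
Proof. by case: j => [[|[|[|[|?]]]] ?]. Qed.

Lemma toy_entry_pmul (p q j : 'I_4) :
  toy_entry (pmul p q) j = toy_entry p j * toy_entry q j.
Proof.
case: p => [[|[|[|[|?]]]] ?] //; case: q => [[|[|[|[|?]]]] ?] //.
all: by case: j => [[|[|[|[|?]]]] ?] //; rewrite /pmul /= /toy_entry ?inordK.
Qed.

Lemma toy_eig_one (I : finType) (s : ontic I) : toy_eig (toy_one I) s = 1.
Proof.
by rewrite /toy_eig expr0 mul1r big1 // => i _; rewrite ffunE toy_entry0.
Qed.

Lemma toy_eig_mul (I : finType) (g h : toyP I) (s : ontic I) :
  toy_eig (toy_mul g h) s = toy_eig g s * toy_eig h s.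
Proof.
rewrite /toy_eig /= mulrACA -big_split /=.
have -> : (-1) ^+ (g.1 (+) h.1) = (-1) ^+ g.1 * (-1) ^+ h.1 :> int.
  by case: g.1; case: h.1; rewrite /= ?expr0 ?expr1 ?mulr1 ?mul1r ?mulrNN.
by congr (_ * _); apply: eq_bigr => i _; rewrite ffunE toy_entry_pmul.
Qed.

Lemma toy_gen_min (I : finType) (G H : {set toyP I}) :
  toy_subgroup H -> G \subset H -> toy_gen G \subset H.
Proof. by move=> subgH sGH; apply: bigcap_inf; rewrite subgH. Qed.

Lemma toy_gen_sub (I : finType) (G : {set toyP I}) : G \subset toy_gen G.
Proof. by rewrite /toy_gen; apply/bigcapsP => H /andP[]. Qed.

Lemma toy_subgroup_fixers (I : finType) (s : ontic I) :
  toy_subgroup [set g : toyP I | toy_eig g s == 1].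
Proof.
rewrite /toy_subgroup inE toy_eig_one eqxx /=.
apply/forall_inP => g; rewrite inE => /eqP gs; apply/forall_inP => h.
by rewrite !inE toy_eig_mul gs mul1r.
Qed.

Lemma epistemic_gen (I : finType) (G : {set toyP I}) :
  epistemic (toy_gen G) = epistemic G.
Proof.
apply/setP => s; rewrite !inE; apply/forall_inP/forall_inP => fix_s g gG.
  by apply: fix_s; apply: (subsetP (toy_gen_sub G)).
have : toy_gen G \subset [set g | toy_eig g s == 1].
  by apply: toy_gen_min; [apply: toy_subgroup_fixers | apply/subsetP => x /fix_s; rewrite inE].
by move/subsetP/(_ g gG); rewrite inE.
Qed.

Lemma epistemicU (I : finType) (G H : {set toyP I}) :
  epistemic (G :|: H) = epistemic G :&: epistemic H.
Proof.
apply/setP => s; rewrite !inE.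
apply/forall_inP/andP => [fix_s | [/forall_inP fG /forall_inP fH] g].
  by split; apply/forall_inP => g gS; apply: fix_s; rewrite inE gS ?orbT.
by case/setUP; [apply: fG | apply: fH].
Qed.

Lemma toy_stab_group_S_A (n : nat) (A : {set 'I_n}) (S : {set toyP 'I_n}) :
  toy_stab_group S -> toy_stab_group (S_A A S).
Proof.
case=> /andP[S1 /forall_inP SM] commS mS; split.
- rewrite /toy_subgroup !inE S1 /=; apply/andP; split.
    by apply/forall_inP => i _; rewrite ffunE.
  apply/forall_inP => g; rewrite inE => /andP[gS /forall_inP g0].
  apply/forall_inP => h; rewrite !inE => /andP[hS /forall_inP h0].
  rewrite (forall_inP (SM g gS) h hS) /=; apply/forall_inP => i iA.
  by rewrite ffunE /pmul (eqP (g0 i iA)) (eqP (h0 i iA)).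
- by move=> g h; rewrite !inE => /andP[gS _] /andP[hS _]; apply: commS.
- by rewrite inE negb_and mS.
Qed.

Section Restriction.

Variables (n : nat) (A : {set 'I_n}).

Definition resA (g : toyP 'I_n) : toyP (sysA A) := (g.1, [ffun i => g.2 (val i)]).

Definition supported (g : toyP 'I_n) : Prop := forall i, i \notin A -> g.2 i = ord0.

Lemma S_A_supported (S : {set toyP 'I_n}) g : g \in S_A A S -> supported g.
Proof.
rewrite inE => /andP[_ /forall_inP g0] i iA; apply/val_inj/eqP.
by apply: g0; rewrite in_setC.
Qed.

Lemma resA_one : resA (toy_one 'I_n) = toy_one (sysA A).
Proof. by congr pair; apply/ffunP => i; rewrite !ffunE. Qed.

Lemma resA_mul g h : resA (toy_mul g h) = toy_mul (resA g) (resA h).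
Proof. by congr pair; apply/ffunP => i; rewrite !ffunE. Qed.

Lemma resA_mone g : supported g -> resA g = toy_mone (sysA A) -> g = toy_mone 'I_n.
Proof.
case: g => b f supp_f [-> f0]; congr pair; apply/ffunP => i; rewrite ffunE.
have [iA | /supp_f //] := boolP (i \in A).
by have := congr1 (fun F : {ffun sysA A -> 'I_4} => F (exist _ i iA)) f0; rewrite !ffunE.
Qed.

Lemma toy_eig_resA g s : supported g -> toy_eig (resA g) (restrA A s) = toy_eig g s.
Proof.
move=> supp_g; rewrite /toy_eig; congr (_ * _).
rewrite (bigID (mem A)) /= [X in _ = _ * X]big1 ?mulr1; last first.
  by move=> i /supp_g ->; rewrite toy_entry0.
by rewrite [RHS]big_sub; apply: eq_bigr => i _; rewrite !ffunE.
Qed.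

(* The sites where g and h anticommute all lie in A, the support of g. *)
Lemma toy_commute_resA g h : supported g ->
  toy_commute (resA g) (resA h) = toy_commute g h.
Proof.
move=> supp_g; rewrite /toy_commute; congr (~~ odd _).
have -> : [set i | site_anticomm (g.2 i) (h.2 i)] =
    val @: [set i : sysA A | site_anticomm ((resA g).2 i) ((resA h).2 i)].
  apply/setP => i; rewrite inE; apply/idP/imsetP => [|[j]]; last first.
    by rewrite inE !ffunE => anti_j ->.
  have [iA anti_i | /supp_g -> //] := boolP (i \in A).
  by exists (exist _ i iA); rewrite // inE !ffunE.
by rewrite card_imset //; apply: val_inj.
Qed.

Lemma toy_stab_group_resA (G : {set toyP 'I_n}) :
  toy_stab_group G -> {in G, forall g, supported g} -> toy_stab_group (resA @: G).
Proof.
case=> /andP[G1 /forall_inP GM] commG mG suppG; split.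
- apply/andP; split; first by rewrite -resA_one imset_f.
  apply/forall_inP => _ /imsetP[g gG ->]; apply/forall_inP => _ /imsetP[h hG ->].
  by rewrite -resA_mul imset_f // (forall_inP (GM g gG)).
- move=> _ _ /imsetP[g gG ->] /imsetP[h hG ->].
  by rewrite toy_commute_resA; [apply: commG | apply: suppG].
- apply/imsetP => -[g gG /esym/(resA_mone (suppG g gG)) gm].
  by rewrite -gm gG in mG.
Qed.

Lemma epistemic_resA (G : {set toyP 'I_n}) s : {in G, forall g, supported g} ->
  (restrA A s \in epistemic (resA @: G)) = (s \in epistemic G).
Proof.
move=> suppG; rewrite !inE.
apply/forall_inP/forall_inP => [fix_s g gG | fix_s _ /imsetP[g gG ->]].
  by rewrite -(toy_eig_resA s (suppG g gG)) fix_s ?imset_f.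
by rewrite toy_eig_resA ?fix_s //; apply: suppG.
Qed.

End Restriction.

Lemma valid_epistemic_S_A (n : nat) (A : {set 'I_n}) (S : {set toyP 'I_n}) :
  toy_stab_group S -> valid_epistemic (epistemic (resA A @: S_A A S)).
Proof.
move=> stabS; exists (resA A @: S_A A S); split => //.
by apply: toy_stab_group_resA; [apply: toy_stab_group_S_A | apply: S_A_supported].
Qed.

Lemma prod_state_mixture (n : nat) (A : {set 'I_n})
    (EA : {set ontic (sysA A)}) (EB : {set ontic (sysB A)}) :
  valid_epistemic EA -> valid_epistemic EB -> mixture_of_products A (prod_state EA EB).
Proof.
move=> validA validB; exists 1%N, (fun=> EA), (fun=> EB); split => //.
- by move=> j1 j2; rewrite !ord1 eqxx.
- by rewrite big_ord1.
Qed.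

(* [sysB A] is by definition [sysA (~: A)], and [S_B A S] is [S_A (~: A) S]. *)
Lemma epistemic_S_AUS_B_prod (n : nat) (A : {set 'I_n}) (S : {set toyP 'I_n}) :
  epistemic (S_A A S :|: S_B A S) =
  prod_state (epistemic (resA A @: S_A A S)) (epistemic (resA (~: A) @: S_A (~: A) S)).
Proof.
have S_BE : S_B A S = S_A (~: A) S by rewrite /S_A setCK.
apply/setP => s; rewrite epistemicU S_BE in_setI [in RHS]inE.
rewrite -(epistemic_resA s (@S_A_supported _ _ S)).
by rewrite -(epistemic_resA s (@S_A_supported _ (~: A) S)).
Qed.

Theorem mainTheorem8 (n : nat) (A : {set 'I_n}) (S : {set toyP 'I_n}) :
  toy_stab_group S ->
  non_maximal S ->
  S = toy_gen (S_A A S :|: S_B A S) ->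
  ~ entangled A (epistemic S).
Proof.
move=> stabS _ genS; apply.
rewrite genS epistemic_gen epistemic_S_AUS_B_prod.
by apply: prod_state_mixture; apply: valid_epistemic_S_A.
Qed.
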